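(* Let $I=[0,1]$ and $f_{1,\infty}$ a sequence of continuous self-maps of $I$. If $(I,f_{1,\infty})$ is weakly mixing of order $3$, then $(\mathcal{M}(I),\widetilde{f}_{1,\infty})$ is weakly mixing of all orders.
   Context: For $f_{1,\infty}=\{f_n\}_{n\ge1}$ write $f_1^n=f_n\circ\cdots\circ f_1$. $\mathcal{M}(I)$ is the space of Borel probability measures on $I$ with the weak$^*$ topology, and $\widetilde{f}_1^n(\mu)(A)=\mu((f_1^n)^{-1}(A))$ for Borel $A$. A non-autonomous system $(Y,g_{1,\infty})$ is weakly mixing of order $m$ ($m\ge2$) if for any non-empty open sets $U_1,\dots,U_m,V_1,\dots,V_m\subseteq Y$ there is $n\in\mathbb{N}$ with $g_1^n(U_i)\cap V_i\neq\emptyset$ for all $1\le i\le m$; weakly mixing of all orders means weakly mixing of order $m$ for every $m\ge2$. *)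

From Stdlib Require Import Reals.
Open Scope R_scope.

Definition II : Type := { x : R | 0 <= x <= 1 }.
Definition ival (x : II) : R := proj1_sig x.

Definition I_open (O : II -> Prop) : Prop :=
  forall x, O x -> exists delta, delta > 0 /\
    forall y, Rabs (ival y - ival x) < delta -> O y.

Definition I_cont (h : II -> II) : Prop :=
  forall x eps, eps > 0 -> exists delta, delta > 0 /\
    forall y, Rabs (ival y - ival x) < delta ->
      Rabs (ival (h y) - ival (h x)) < eps.

Definition I_contR (g : II -> R) : Prop :=
  forall x eps, eps > 0 -> exists delta, delta > 0 /\
    forall y, Rabs (ival y - ival x) < delta -> Rabs (g y - g x) < eps.

(** f_1^n = f_n o ... o f_1 (f_1^0 = id; f 0 is never used). *)
Fixpoint fcomp (f : nat -> II -> II) (n : nat) : II -> II :=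
  match n with
  | O => fun x => x
  | S k => fun x => f (S k) (fcomp f k x)
  end.

Definition sigma_algebra (S : (II -> Prop) -> Prop) : Prop :=
  S (fun _ => True) /\
  (forall A, S A -> S (fun x => ~ A x)) /\
  (forall A : nat -> II -> Prop, (forall n, S (A n)) -> S (fun x => exists n, A n x)).

Definition Borel (A : II -> Prop) : Prop :=
  forall S, sigma_algebra S -> (forall O, I_open O -> S O) -> S A.

Definition pw_disjoint (A : nat -> II -> Prop) : Prop :=
  forall i j, i <> j -> forall x, ~ (A i x /\ A j x).

(** A measure is a set function on all
    subsets; it is normalized to be 0 off the Borel sets so that each Borel
    probability measure is represented by exactly one set function. *)
Record ProbMeasure : Type := {
  mu :> (II -> Prop) -> R;
  mu_nonneg : forall A, Borel A -> 0 <= mu A;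
  mu_full : mu (fun _ => True) = 1;
  mu_sigma_add : forall A : nat -> II -> Prop,
      (forall n, Borel (A n)) -> pw_disjoint A ->
      infinite_sum (fun n => mu (A n)) (mu (fun x => exists n, A n x));
  mu_nonborel : forall A, ~ Borel A -> mu A = 0
}.

Definition is_pushforward (h : II -> II) (m nu : ProbMeasure) : Prop :=
  forall A, Borel A -> nu A = m (fun x => A (h (x))).

Fixpoint fsum (a : nat -> R) (k : nat) : R :=
  match k with O => 0 | S j => fsum a j + a j end.

Definition lower_sum (m : ProbMeasure) (g : II -> R) (v : R) : Prop :=
  exists (k : nat) (c : nat -> R) (A : nat -> II -> Prop),
    (forall i, (i < k)%nat ->
       0 <= c i /\ Borel (A i) /\ forall x, A i x -> c i <= g x) /\
    (forall i j, (i < k)%nat -> (j < k)%nat -> i <> j ->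
       forall x, ~ (A i x /\ A j x)) /\
    v = fsum (fun i => c i * m (A i)) k.

Definition integral_nonneg (m : ProbMeasure) (g : II -> R) (v : R) : Prop :=
  is_lub (lower_sum m g) v.

Definition integral (m : ProbMeasure) (g : II -> R) (v : R) : Prop :=
  exists a b, integral_nonneg m (fun x => Rmax (g x) 0) a /\
              integral_nonneg m (fun x => Rmax (- g x) 0) b /\ v = a - b.

Definition M_open (O : ProbMeasure -> Prop) : Prop :=
  forall m, O m -> exists (k : nat) (g : nat -> II -> R) (eps : R),
    eps > 0 /\ (forall i, (i < k)%nat -> I_contR (g i)) /\
    forall nu, (forall i, (i < k)%nat -> forall a b,
                  integral m (g i) a -> integral nu (g i) b -> Rabs (a - b) < eps) ->
               O nu.

(** Weak mixing of order m for a non-autonomous system given by a notion of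
    open set and the (graph of the) maps g_1^n, n >= 1:
    step n y z  <->  z = g_1^n (y).  Indices 1..m are rendered as 0..m-1. *)
Definition weakly_mixing_order {Y : Type} (isOpen : (Y -> Prop) -> Prop)
  (step : nat -> Y -> Y -> Prop) (m : nat) : Prop :=
  forall U V : nat -> Y -> Prop,
    (forall i, (i < m)%nat ->
       isOpen (U i) /\ isOpen (V i) /\ (exists y, U i y) /\ (exists y, V i y)) ->
    exists n, (1 <= n)%nat /\
      forall i, (i < m)%nat -> exists y z, U i y /\ step n y z /\ V i z.

Definition weakly_mixing_all {Y : Type} (isOpen : (Y -> Prop) -> Prop)
  (step : nat -> Y -> Y -> Prop) : Prop :=
  forall m, (2 <= m)%nat -> weakly_mixing_order isOpen step m.

Definition I_step (f : nat -> II -> II) (n : nat) (x y : II) : Prop :=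
  y = fcomp f n x.

Definition M_step (f : nat -> II -> II) (n : nat) (m nu : ProbMeasure) : Prop :=
  is_pushforward (fcomp f n) m nu.

From Stdlib Require Import Reals Arith Lra Lia Classical ClassicalEpsilon FunctionalExtensionality PropExtensionality ProofIrrelevance.
Open Scope R_scope.

(* Weak mixing of order 3 lets one stretch a small ball across both ends of I
   while a point of a given open set lands in the middle; by the intermediate
   value theorem the ball then covers [d, 1-d] at that time, and its preimage
   gives a smaller open set whose orbit is shadowed by an orbit from each of
   finitely many prescribed open sets.  Hence for nonempty open U_1, ..., U_M
   there is one time n at which every f_1^n(U_i) covers [d, 1-d].
   A weak* neighbourhood of a measure contains every measure with the same
   masses on the cells of a fine enough grid.  Given grid masses p_a and q_b,
   put mass p_a q_b at a point of cell a which f_1^n sends to the midpoint of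
   cell b: this measure has masses p_a and its push-forward has masses q_b. *)

Lemma pred_ext {T : Type} (A B : T -> Prop) : (forall x, A x <-> B x) -> A = B.
Proof.
  intros H; apply functional_extensionality; intros x; apply propositional_extensionality; auto.
Qed.

Lemma Rabs_le_iff x e : Rabs x <= e <-> - e <= x <= e.
Proof. unfold Rabs; destruct (Rcase_abs x); split; intros; lra. Qed.

Lemma Rabs_lt_iff x e : Rabs x < e <-> - e < x < e.
Proof. unfold Rabs; destruct (Rcase_abs x); split; intros; lra. Qed.

Lemma Rmax0_lipschitz a b : Rabs (Rmax a 0 - Rmax b 0) <= Rabs (a - b).
Proof.
  apply Rabs_le_iff; unfold Rmax, Rabs; destruct (Rcase_abs (a - b));
    repeat destruct Rle_dec; lra.
Qed.

Lemma exists_common_pos (k : nat) (P : nat -> R -> Prop) :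
  (forall i e e', 0 < e' <= e -> P i e -> P i e') ->
  (forall i, (i < k)%nat -> exists e, 0 < e /\ P i e) ->
  exists e, 0 < e /\ forall i, (i < k)%nat -> P i e.
Proof.
  intros Hmono; induction k as [|k IH]; intros H.
  - exists 1; split; [lra | intros; lia].
  - destruct IH as [e1 [He1 H1]]; [intros; apply H; lia|].
    destruct (H k) as [e2 [He2 H2]]; [lia|].
    assert (Hmin : 0 < Rmin e1 e2) by (apply Rmin_pos; auto).
    exists (Rmin e1 e2); split; auto.
    intros i Hi; destruct (Nat.eq_dec i k) as [->|Hik].
    + apply (Hmono _ e2); auto; split; [auto | apply Rmin_r].
    + apply (Hmono _ e1); [split; [auto | apply Rmin_l] | apply H1; lia].
Qed.

Lemma ival_inj (a b : II) : ival a = ival b -> a = b.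
Proof.
  destruct a as [x hx], b as [y hy]; simpl; intros ->; f_equal; apply proof_irrelevance.
Qed.

Lemma ival_bounds (a : II) : 0 <= ival a <= 1.
Proof. destruct a; simpl; auto. Qed.

Definition clampR (t : R) : R := Rmax 0 (Rmin t 1).

Lemma clampR_bounds t : 0 <= clampR t <= 1.
Proof. unfold clampR, Rmax, Rmin; repeat destruct Rle_dec; lra. Qed.

Definition clamp (t : R) : II := exist _ (clampR t) (clampR_bounds t).

Lemma ival_clamp t : 0 <= t <= 1 -> ival (clamp t) = t.
Proof. intros; simpl; unfold clampR, Rmax, Rmin; repeat destruct Rle_dec; lra. Qed.

Lemma clamp_ival y : clamp (ival y) = y.
Proof. apply ival_inj, ival_clamp, ival_bounds. Qed.

Lemma clamp_lipschitz s t : Rabs (ival (clamp s) - ival (clamp t)) <= Rabs (s - t).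
Proof.
  simpl; unfold clampR, Rmax, Rmin; apply Rabs_le_iff; unfold Rabs;
    destruct (Rcase_abs (s - t)); repeat destruct Rle_dec; lra.
Qed.

Lemma I_open_ext (A B : II -> Prop) : (forall x, A x <-> B x) -> I_open A -> I_open B.
Proof. intros H; rewrite (pred_ext A B H); auto. Qed.

Lemma I_open_and A B : I_open A -> I_open B -> I_open (fun x => A x /\ B x).
Proof.
  intros HA HB y [Ay By].
  destruct (HA y Ay) as [d1 [H1 H1']], (HB y By) as [d2 [H2 H2']].
  exists (Rmin d1 d2); split; [apply Rmin_pos; lra|].
  intros z Hz; split.
  - apply H1'; eapply Rlt_le_trans; [apply Hz | apply Rmin_l].
  - apply H2'; eapply Rlt_le_trans; [apply Hz | apply Rmin_r].
Qed.

Lemma I_open_lt_scaled s c : 0 < s -> I_open (fun y => s * ival y < c).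
Proof.
  intros Hs y Hy; exists ((c - s * ival y) / s); split; [apply Rdiv_lt_0_compat; lra|].
  intros z Hz; apply Rabs_lt_iff in Hz; destruct Hz as [_ Hz].
  apply (Rmult_lt_compat_l s) in Hz; auto.
  replace (s * ((c - s * ival y) / s)) with (c - s * ival y) in Hz by (field; lra); nra.
Qed.

Lemma I_open_gt_scaled s c : 0 < s -> I_open (fun y => c < s * ival y).
Proof.
  intros Hs y Hy; exists ((s * ival y - c) / s); split; [apply Rdiv_lt_0_compat; lra|].
  intros z Hz; apply Rabs_lt_iff in Hz; destruct Hz as [Hz _].
  apply (Rmult_lt_compat_l s) in Hz; auto.
  replace (s * - ((s * ival y - c) / s)) with (- (s * ival y - c)) in Hz by (field; lra); nra.
Qed.

Lemma I_open_lt c : I_open (fun y => ival y < c).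
Proof. apply (I_open_ext (fun y => 1 * ival y < c)); [intros; lra | apply I_open_lt_scaled; lra]. Qed.

Lemma I_open_gt c : I_open (fun y => c < ival y).
Proof. apply (I_open_ext (fun y => c < 1 * ival y)); [intros; lra | apply I_open_gt_scaled; lra]. Qed.

Definition ball (x : II) (r : R) : II -> Prop := fun y => Rabs (ival y - ival x) < r.

Lemma ball_center x r : 0 < r -> ball x r x.
Proof. intros; unfold ball; rewrite Rminus_diag, Rabs_R0; lra. Qed.

Lemma ball_open x r : I_open (ball x r).
Proof.
  intros y Hy; unfold ball in *; exists (r - Rabs (ival y - ival x)); split; [lra|].
  intros z Hz; apply Rabs_lt_iff in Hz; apply Rabs_lt_iff.
  unfold Rabs in *; destruct (Rcase_abs (ival y - ival x)); lra.
Qed.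

Lemma ball_le x r r' y : r <= r' -> ball x r y -> ball x r' y.
Proof. unfold ball; lra. Qed.

Lemma I_open_preimage h O : I_cont h -> I_open O -> I_open (fun x => O (h x)).
Proof.
  intros Hh HO x Ox; destruct (HO _ Ox) as [d [Hd Hd']].
  destruct (Hh x d Hd) as [d2 [Hd2 Hd2']]; exists d2; split; auto.
Qed.

Lemma continuity_clamp (g : II -> R) : I_contR g -> continuity (fun t => g (clamp t)).
Proof.
  intros Hg x; unfold continuity_pt, continue_in, limit1_in, limit_in; simpl; unfold Rdist.
  intros eps He; destruct (Hg (clamp x) eps He) as [d [Hd Hd']].
  exists d; split; auto; intros y [_ Hy].
  apply Hd'; eapply Rle_lt_trans; [apply clamp_lipschitz | auto].
Qed.

Lemma I_contR_uniform (g : II -> R) : I_contR g -> forall eps, eps > 0 ->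
  exists eta, eta > 0 /\
    forall y z, Rabs (ival y - ival z) < eta -> Rabs (g y - g z) < eps.
Proof.
  intros Hg eps He.
  destruct (Heine (fun t => g (clamp t)) (fun c => 0 <= c <= 1) (compact_P3 0 1)
              (fun x _ => continuity_clamp g Hg x) (mkposreal eps He)) as [[d Hd] Hd'].
  simpl in Hd'; exists d; split; auto; intros y z Hyz.
  specialize (Hd' (ival y) (ival z) (ival_bounds y) (ival_bounds z) Hyz).
  rewrite !clamp_ival in Hd'; auto.
Qed.

Lemma I_cont_IVT (h : II -> II) (u1 u2 : II) (c : R) : I_cont h ->
  ival (h u1) < c -> c < ival (h u2) ->
  exists u, Rmin (ival u1) (ival u2) <= ival u <= Rmax (ival u1) (ival u2) /\ ival (h u) = c.
Proof.
  intros Hh H1 H2.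
  pose proof (continuity_clamp (fun x => ival (h x)) Hh) as HC.
  pose proof (ival_bounds u1); pose proof (ival_bounds u2).
  assert (Hcst : continuity (fun _ : R => c)) by (apply continuity_const; intros ? ?; auto).
  destruct (Rtotal_order (ival u1) (ival u2)) as [Hlt|[Heq|Hgt]].
  - destruct (IVT (fun t => ival (h (clamp t)) - c) (ival u1) (ival u2)) as [z [Hz Hz']];
      [apply continuity_minus; auto | auto | rewrite clamp_ival; lra | rewrite clamp_ival; lra |].
    exists (clamp z); rewrite ival_clamp by lra.
    split; [unfold Rmin, Rmax; repeat destruct Rle_dec; lra | lra].
  - apply ival_inj in Heq; subst; lra.
  - destruct (IVT (fun t => c - ival (h (clamp t))) (ival u2) (ival u1)) as [z [Hz Hz']];
      [apply continuity_minus; auto | auto | rewrite clamp_ival; lra | rewrite clamp_ival; lra |].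
    exists (clamp z); rewrite ival_clamp by lra.
    split; [unfold Rmin, Rmax; repeat destruct Rle_dec; lra | lra].
Qed.

Lemma fsum_ext a b k : (forall i, (i < k)%nat -> a i = b i) -> fsum a k = fsum b k.
Proof.
  induction k; simpl; intros H; auto.
  rewrite IHk by (intros; apply H; lia); rewrite H by lia; auto.
Qed.

Lemma fsum_plus a b k : fsum (fun i => a i + b i) k = fsum a k + fsum b k.
Proof. induction k; simpl; [lra | rewrite IHk; lra]. Qed.

Lemma fsum_scal c a k : fsum (fun i => c * a i) k = c * fsum a k.
Proof. induction k; simpl; [lra | rewrite IHk; lra]. Qed.

Lemma fsum_scalr c a k : fsum (fun i => a i * c) k = fsum a k * c.
Proof. induction k; simpl; [lra | rewrite IHk; lra]. Qed.

Lemma fsum_le a b k : (forall i, (i < k)%nat -> a i <= b i) -> fsum a k <= fsum b k.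
Proof.
  induction k; simpl; intros H; [lra|].
  assert (a k <= b k) by (apply H; lia).
  assert (fsum a k <= fsum b k) by (apply IHk; intros; apply H; lia); lra.
Qed.

Lemma fsum_zero k : fsum (fun _ => 0) k = 0.
Proof. induction k; simpl; [auto | rewrite IHk; lra]. Qed.

Lemma fsum_nonneg a k : (forall i, (i < k)%nat -> 0 <= a i) -> 0 <= fsum a k.
Proof. intros H; rewrite <- (fsum_zero k); apply fsum_le; auto. Qed.

Lemma fsum_exchange (F : nat -> nat -> R) k1 k2 :
  fsum (fun i => fsum (fun j => F i j) k2) k1 = fsum (fun j => fsum (fun i => F i j) k1) k2.
Proof. induction k1; simpl; [rewrite fsum_zero; auto | rewrite IHk1, <- fsum_plus; auto]. Qed.

Lemma fsum_kronecker (F : nat -> R) k j : (j < k)%nat ->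
  fsum (fun i => (if Nat.eq_dec i j then 1 else 0) * F i) k = F j.
Proof.
  induction k; intros Hj; [lia|]; simpl; destruct (Nat.eq_dec k j) as [->|Hkj].
  - rewrite (fsum_ext _ (fun _ => 0)), fsum_zero; [lra|].
    intros; destruct Nat.eq_dec; [lia | lra].
  - rewrite IHk by lia; lra.
Qed.

Lemma sum_f_R0_fsum s n : sum_f_R0 s n = fsum s (S n).
Proof. induction n; simpl; [lra | rewrite IHn; auto]. Qed.

(** * Borel sets *)

Lemma Borel_open O : I_open O -> Borel O.
Proof. intros HO S HS HSO; auto. Qed.

Lemma Borel_True : Borel (fun _ => True).
Proof. intros S HS _; apply HS. Qed.

Lemma Borel_compl A : Borel A -> Borel (fun x => ~ A x).
Proof. intros HA S HS HO; apply (proj1 (proj2 HS)), HA; auto. Qed.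

Lemma Borel_union (A : nat -> II -> Prop) :
  (forall n, Borel (A n)) -> Borel (fun x => exists n, A n x).
Proof. intros HA S HS HO; apply (proj2 (proj2 HS)); intros n; apply HA; auto. Qed.

Lemma Borel_ext A B : (forall x, A x <-> B x) -> Borel A -> Borel B.
Proof. intros H; rewrite (pred_ext A B H); auto. Qed.

Lemma Borel_False : Borel (fun _ => False).
Proof. apply (Borel_ext (fun _ => ~ True)); [tauto | apply Borel_compl, Borel_True]. Qed.

Lemma Borel_or A B : Borel A -> Borel B -> Borel (fun x => A x \/ B x).
Proof.
  intros HA HB; apply (Borel_ext (fun x => exists n, (match n with O => A | _ => B end) x)).
  - intros x; split; [intros [[|n] H]; auto|].
    intros [H|H]; [exists O | exists 1%nat]; auto.
  - apply Borel_union; intros [|n]; auto.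
Qed.

Lemma Borel_and A B : Borel A -> Borel B -> Borel (fun x => A x /\ B x).
Proof.
  intros HA HB; apply (Borel_ext (fun x => ~ (~ A x \/ ~ B x))).
  - intros x; split; [intros H; split; apply NNPP; tauto | tauto].
  - apply Borel_compl, Borel_or; apply Borel_compl; auto.
Qed.

Lemma Borel_bounded_index (k : nat) (A : nat -> II -> Prop) n :
  (forall i, (i < k)%nat -> Borel (A i)) -> Borel (fun x => (n < k)%nat /\ A n x).
Proof.
  intros HA; destruct (lt_dec n k) as [Hn|Hn].
  - apply (Borel_ext (A n)); [tauto | auto].
  - apply (Borel_ext (fun _ => False)); [tauto | apply Borel_False].
Qed.

Lemma Borel_preimage h A : I_cont h -> Borel A -> Borel (fun x => A (h x)).
Proof.
  intros Hh HA S HS HO.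
  apply (HA (fun B => S (fun x => B (h x)))).
  - destruct HS as [h1 [h2 h3]]; repeat split; auto.
  - intros O HOo; apply HO, I_open_preimage; auto.
Qed.

(** * Probability measures *)

Section Measure.
Variable m : ProbMeasure.

Lemma mu_ext A B : (forall x, A x <-> B x) -> m A = m B.
Proof. intros H; rewrite (pred_ext A B H); auto. Qed.

(* Countable additivity applied to the constant sequence E, E, ... forces m E = 0. *)
Lemma mu_empty E : (forall x, ~ E x) -> m E = 0.
Proof.
  intros HE.
  assert (BE : Borel E) by (apply (Borel_ext (fun _ => False)); [firstorder | apply Borel_False]).
  assert (Hd : pw_disjoint (fun _ => E)) by (intros i j _ x [h _]; apply (HE x h)).
  pose proof (mu_sigma_add m (fun _ => E) (fun _ => BE) Hd) as H.
  rewrite (mu_ext _ E) in H by firstorder.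
  set (c := m E) in *; clearbody c.
  destruct (Req_dec c 0) as [|Hc]; auto; exfalso.
  destruct (H (Rabs c)) as [N HN]; [apply Rabs_pos_lt; auto|].
  specialize (HN (S N) ltac:(lia)); rewrite sum_cte in HN; unfold Rdist in HN.
  replace (c * INR (S (S N)) - c) with (c * INR (S N)) in HN by (rewrite !S_INR; ring).
  rewrite Rabs_mult, (Rabs_right (INR (S N))) in HN by (apply Rle_ge, pos_INR).
  rewrite S_INR in HN; pose proof (pos_INR N); pose proof (Rabs_pos c); nra.
Qed.

Lemma mu_finite_additive k (A : nat -> II -> Prop) :
  (forall i, (i < k)%nat -> Borel (A i)) ->
  (forall i j, (i < k)%nat -> (j < k)%nat -> i <> j -> forall x, ~ (A i x /\ A j x)) ->
  m (fun x => exists i, (i < k)%nat /\ A i x) = fsum (fun i => m (A i)) k.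
Proof.
  intros HB HD.
  set (A' := fun n x => (n < k)%nat /\ A n x).
  assert (HD' : pw_disjoint A') by (intros i j Hij x [[hi ai] [hj aj]]; apply (HD i j hi hj Hij x); auto).
  apply (uniqueness_sum _ _ _ (mu_sigma_add m A' (fun n => Borel_bounded_index k A n HB) HD')).
  assert (Htail : forall j, fsum (fun n => m (A' n)) (k + j) = fsum (fun i => m (A i)) k).
  { induction j.
    - rewrite Nat.add_0_r; apply fsum_ext; intros i Hi; apply mu_ext; unfold A'; tauto.
    - rewrite Nat.add_succ_r; simpl; rewrite IHj, mu_empty; [lra|].
      unfold A'; intros x [h _]; lia. }
  intros e He; exists k; intros n Hn.
  rewrite sum_f_R0_fsum; replace (S n) with (k + (S n - k))%nat by lia.
  rewrite Htail; unfold Rdist; rewrite Rminus_diag, Rabs_R0; auto.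
Qed.

Lemma mu_mono A B : Borel A -> Borel B -> (forall x, A x -> B x) -> m A <= m B.
Proof.
  intros HA HB HAB.
  set (C := fun n => match n with O => A | _ => fun x => B x /\ ~ A x end).
  assert (HBC : Borel (fun x => B x /\ ~ A x)) by (apply Borel_and, Borel_compl; auto).
  assert (Hsplit : m B = fsum (fun i => m (C i)) 2).
  { rewrite <- (mu_finite_additive 2 C).
    - apply mu_ext; intros x; split.
      + intros hb; destruct (classic (A x)); [exists O | exists 1%nat]; simpl; auto.
      + intros [[|[|i]] [hi h]]; simpl in h; [auto | tauto | lia].
    - intros [|[|i]] hi; simpl; [auto | auto | lia].
    - intros [|[|i]] [|[|j]] hi hj hij x; simpl; try tauto; lia. }
  rewrite Hsplit; simpl; pose proof (mu_nonneg m _ HBC); lra.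
Qed.

End Measure.

(** * Integrals against finite Borel partitions *)

Definition partition (N : nat) (J : nat -> II -> Prop) : Prop :=
  (forall a, (a < N)%nat -> Borel (J a)) /\
  (forall a b, (a < N)%nat -> (b < N)%nat -> a <> b -> forall x, ~ (J a x /\ J b x)) /\
  (forall x, exists a, (a < N)%nat /\ J a x).

Lemma partition_mass (m : ProbMeasure) N J : partition N J -> fsum (fun a => m (J a)) N = 1.
Proof.
  intros [HB [HD HC]]; rewrite <- (mu_finite_additive m N J), <- (mu_full m); auto.
  apply mu_ext; intros x; split; auto.
Qed.

Section StepApproximation.
Variables (m : ProbMeasure) (N : nat) (J : nat -> II -> Prop).
Hypothesis HJ : partition N J.
Variables (phi : II -> R) (c : nat -> R) (eps : R).
Hypothesis Heps : 0 <= eps.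
Hypothesis Hphi : forall x, 0 <= phi x.
Hypothesis Hc : forall a, (a < N)%nat -> 0 <= c a.
Hypothesis Hclose : forall a x, (a < N)%nat -> J a x -> Rabs (phi x - c a) <= eps.

Lemma step_sum_shift (d : R) :
  fsum (fun a => (c a + d) * m (J a)) N = fsum (fun a => c a * m (J a)) N + d.
Proof.
  rewrite (fsum_ext _ (fun a => c a * m (J a) + d * m (J a))) by (intros; ring).
  rewrite fsum_plus, fsum_scal, (partition_mass m N J HJ); ring.
Qed.

Lemma step_sum_le_lower_sum :
  lower_sum m phi (fsum (fun a => Rmax (c a - eps) 0 * m (J a)) N).
Proof.
  destruct HJ as [HB [HD _]]; exists N, (fun a => Rmax (c a - eps) 0), J.
  split; [|split; auto].
  intros i Hi; split; [apply Rmax_r | split; auto].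
  intros x Jx; specialize (Hclose i x Hi Jx); apply Rabs_le_iff in Hclose.
  specialize (Hphi x); unfold Rmax; destruct Rle_dec; lra.
Qed.

(* A simple function below phi is refined along the partition J; on each
   piece A i /\ J a its value is at most c a + eps. *)
Lemma lower_sum_le_step_sum s :
  lower_sum m phi s -> s <= fsum (fun a => (c a + eps) * m (J a)) N.
Proof.
  intros [k [d [A [Hk [HAd ->]]]]]; destruct HJ as [HB [HD HC]].
  assert (HBAJ : forall i a, (i < k)%nat -> (a < N)%nat -> Borel (fun x => A i x /\ J a x))
    by (intros i a Hi Ha; apply Borel_and; [apply Hk | apply HB]; auto).
  assert (Hrefine : forall i, (i < k)%nat -> m (A i) = fsum (fun a => m (fun x => A i x /\ J a x)) N).
  { intros i Hi; rewrite <- mu_finite_additive; auto.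
    - apply mu_ext; intros x; split; [|intros [a [_ [h _]]]; auto].
      intros ax; destruct (HC x) as [a [ha ja]]; exists a; auto.
    - intros a b ha hb hab x [[_ h1] [_ h2]]; apply (HD a b ha hb hab x); auto. }
  apply Rle_trans with (fsum (fun i => fsum (fun a => (c a + eps) * m (fun x => A i x /\ J a x)) N) k).
  - apply fsum_le; intros i Hi; rewrite Hrefine by auto; rewrite <- fsum_scal.
    apply fsum_le; intros a Ha; destruct (Hk i Hi) as [hd [hb hle]].
    destruct (classic (exists x, A i x /\ J a x)) as [[x [ax jx]]|Hn].
    + apply Rmult_le_compat_r; [apply mu_nonneg; auto|].
      specialize (hle x ax); specialize (Hclose a x Ha jx); apply Rabs_le_iff in Hclose; lra.
    + rewrite mu_empty; [lra | firstorder].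
  - rewrite fsum_exchange; apply fsum_le; intros a Ha; rewrite fsum_scal.
    apply Rmult_le_compat_l; [specialize (Hc a Ha); lra|].
    rewrite <- mu_finite_additive; auto.
    + apply mu_mono; [|auto | intros x [i [_ [_ h]]]; auto].
      apply Borel_union; intros n.
      apply (Borel_ext (fun x => (n < k)%nat /\ (A n x /\ J a x))); [tauto|].
      apply (Borel_bounded_index k (fun i x => A i x /\ J a x)); auto.
    + intros i j hi hj hij x [[h1 _] [h2 _]]; apply (HAd i j hi hj hij x); auto.
Qed.

Lemma integral_nonneg_near_step v :
  integral_nonneg m phi v -> Rabs (v - fsum (fun a => c a * m (J a)) N) <= eps.
Proof.
  intros [Hub Hlub]; apply Rabs_le_iff; split.
  - assert (Hlow := Hub _ step_sum_le_lower_sum).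
    assert (fsum (fun a => (c a + - eps) * m (J a)) N
            <= fsum (fun a => Rmax (c a - eps) 0 * m (J a)) N).
    { apply fsum_le; intros i Hi; apply Rmult_le_compat_r;
        [apply mu_nonneg; apply HJ; auto | apply Rmax_l]. }
    rewrite step_sum_shift in *; lra.
  - assert (v <= fsum (fun a => (c a + eps) * m (J a)) N)
      by (apply Hlub; intros s Hs; apply lower_sum_le_step_sum; auto).
    rewrite step_sum_shift in *; lra.
Qed.

End StepApproximation.

Lemma integrals_close_of_equal_masses (m1 m2 : ProbMeasure) N J (mid : nat -> II)
  (g : II -> R) eps : partition N J -> 0 <= eps ->
  (forall a x, (a < N)%nat -> J a x -> Rabs (g x - g (mid a)) <= eps) ->
  (forall a, (a < N)%nat -> m1 (J a) = m2 (J a)) ->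
  forall v1 v2, integral m1 g v1 -> integral m2 g v2 -> Rabs (v1 - v2) <= 4 * eps.
Proof.
  intros HJ Heps Hg Hmass v1 v2 [a1 [b1 [Ha1 [Hb1 ->]]]] [a2 [b2 [Ha2 [Hb2 ->]]]].
  assert (Hpos : forall a x, (a < N)%nat -> J a x ->
                 Rabs (Rmax (g x) 0 - Rmax (g (mid a)) 0) <= eps)
    by (intros; eapply Rle_trans; [apply Rmax0_lipschitz | auto]).
  assert (Hneg : forall a x, (a < N)%nat -> J a x ->
                 Rabs (Rmax (- g x) 0 - Rmax (- g (mid a)) 0) <= eps).
  { intros; eapply Rle_trans; [apply Rmax0_lipschitz|].
    replace (- g x - - g (mid a)) with (- (g x - g (mid a))) by ring; rewrite Rabs_Ropp; auto. }
  pose proof (fun m v => integral_nonneg_near_step m N J HJ _ (fun a => Rmax (g (mid a)) 0) eps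
                Heps (fun _ => Rmax_r _ _) (fun _ _ => Rmax_r _ _) Hpos v) as Ep.
  pose proof (fun m v => integral_nonneg_near_step m N J HJ _ (fun a => Rmax (- g (mid a)) 0) eps
                Heps (fun _ => Rmax_r _ _) (fun _ _ => Rmax_r _ _) Hneg v) as En.
  pose proof (Ep m1 _ Ha1) as E1; pose proof (Ep m2 _ Ha2) as E2.
  pose proof (En m1 _ Hb1) as E3; pose proof (En m2 _ Hb2) as E4.
  rewrite (fsum_ext _ (fun a => Rmax (g (mid a)) 0 * m1 (J a))) in E2
    by (intros; rewrite Hmass; auto).
  rewrite (fsum_ext _ (fun a => Rmax (- g (mid a)) 0 * m1 (J a))) in E4
    by (intros; rewrite Hmass; auto).
  apply Rabs_le_iff in E1, E2, E3, E4; apply Rabs_le_iff; lra.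
Qed.

(** * Finitely supported measures *)

Definition indicator (P : Prop) : R := if excluded_middle_informative P then 1 else 0.

Lemma indicator_true (P : Prop) : P -> indicator P = 1.
Proof. unfold indicator; destruct excluded_middle_informative; tauto. Qed.

Lemma indicator_false (P : Prop) : ~ P -> indicator P = 0.
Proof. unfold indicator; destruct excluded_middle_informative; tauto. Qed.

Lemma indicator_nonneg P : 0 <= indicator P.
Proof. unfold indicator; destruct excluded_middle_informative; lra. Qed.

Definition eventually_eq (s : nat -> R) (L : R) : Prop :=
  exists K, forall n, (n >= K)%nat -> s n = L.

Lemma infinite_sum_of_eventually_eq s L :
  eventually_eq (fun K => sum_f_R0 s K) L -> infinite_sum s L.
Proof.
  intros [K HK] e He; exists K; intros n Hn; rewrite HK by auto.
  unfold Rdist; rewrite Rminus_diag, Rabs_R0; auto.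
Qed.

Lemma eventually_eq_fsum (s : nat -> nat -> R) L k :
  (forall i, (i < k)%nat -> eventually_eq (s i) (L i)) ->
  eventually_eq (fun K => fsum (fun i => s i K) k) (fsum L k).
Proof.
  induction k as [|k IH]; intros H; [exists O; intros; simpl; auto|].
  destruct IH as [K1 H1]; [intros; apply H; lia|].
  destruct (H k) as [K2 H2]; [lia|].
  exists (max K1 K2); intros n Hn; simpl; rewrite H1, H2 by lia; auto.
Qed.

Lemma eventually_eq_scal s L c : eventually_eq s L -> eventually_eq (fun K => c * s K) (c * L).
Proof. intros [K HK]; exists K; intros n Hn; rewrite HK; auto. Qed.

Lemma eventually_eq_indicator_sum (A : nat -> II -> Prop) y : pw_disjoint A ->
  eventually_eq (fun K => sum_f_R0 (fun n => indicator (A n y)) K) (indicator (exists n, A n y)).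
Proof.
  intros HD; destruct (classic (exists n, A n y)) as [[n0 H0]|Hn].
  - rewrite indicator_true by eauto; exists n0; intros n Hn.
    assert (Hother : forall j, j <> n0 -> indicator (A j y) = 0)
      by (intros j Hj; apply indicator_false; intros h; apply (HD j n0 Hj y); auto).
    rewrite sum_f_R0_fsum, (fsum_ext _ (fun j => (if Nat.eq_dec j n0 then 1 else 0) * 1)).
    + apply fsum_kronecker; lia.
    + intros j _; destruct Nat.eq_dec as [->|Hj]; [rewrite indicator_true; auto; ring|].
      rewrite Hother; auto; ring.
  - rewrite indicator_false by auto; exists O; intros n _.
    rewrite sum_f_R0_fsum, (fsum_ext _ (fun _ => 0)), fsum_zero; auto.
    intros j _; apply indicator_false; eauto.
Qed.

Lemma sum_f_R0_fsum_exchange (F : nat -> nat -> R) k K :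
  sum_f_R0 (fun n => fsum (fun a => F a n) k) K = fsum (fun a => sum_f_R0 (F a) K) k.
Proof.
  rewrite sum_f_R0_fsum, fsum_exchange; apply fsum_ext; intros; rewrite sum_f_R0_fsum; auto.
Qed.

Section DiscreteMeasure.
Variables (N1 N2 : nat) (w : nat -> nat -> R) (x : nat -> nat -> II).
Hypothesis Hw : forall a b, (a < N1)%nat -> (b < N2)%nat -> 0 <= w a b.
Hypothesis Hw1 : fsum (fun a => fsum (fun b => w a b) N2) N1 = 1.

Definition discrete_mass (A : II -> Prop) : R :=
  fsum (fun a => fsum (fun b => w a b * indicator (A (x a b))) N2) N1.

Definition discrete_set_function (A : II -> Prop) : R :=
  if excluded_middle_informative (Borel A) then discrete_mass A else 0.

Lemma discrete_set_function_Borel A : Borel A -> discrete_set_function A = discrete_mass A.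
Proof. unfold discrete_set_function; destruct excluded_middle_informative; tauto. Qed.

Lemma discrete_mass_sigma_additive (A : nat -> II -> Prop) : pw_disjoint A ->
  infinite_sum (fun n => discrete_mass (A n)) (discrete_mass (fun y => exists n, A n y)).
Proof.
  intros HD; apply infinite_sum_of_eventually_eq; unfold discrete_mass.
  destruct (eventually_eq_fsum
    (fun a K => fsum (fun b => w a b * sum_f_R0 (fun n => indicator (A n (x a b))) K) N2)
    (fun a => fsum (fun b => w a b * indicator (exists n, A n (x a b))) N2) N1) as [K HK].
  { intros a Ha; apply (eventually_eq_fsum
      (fun b K => w a b * sum_f_R0 (fun n => indicator (A n (x a b))) K)).
    intros b Hb; apply eventually_eq_scal, eventually_eq_indicator_sum; auto. }
  exists K; intros n Hn; rewrite <- (HK n Hn), sum_f_R0_fsum_exchange.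
  apply fsum_ext; intros a Ha; rewrite sum_f_R0_fsum_exchange.
  apply fsum_ext; intros b Hb; rewrite !sum_f_R0_fsum, fsum_scal; auto.
Qed.

Definition discrete_measure : ProbMeasure.
Proof.
  refine {| mu := discrete_set_function |}.
  - intros A HA; rewrite discrete_set_function_Borel by auto.
    apply fsum_nonneg; intros a Ha; apply fsum_nonneg; intros b Hb.
    apply Rmult_le_pos; [auto | apply indicator_nonneg].
  - rewrite discrete_set_function_Borel by apply Borel_True; rewrite <- Hw1.
    apply fsum_ext; intros; apply fsum_ext; intros; rewrite indicator_true; auto; ring.
  - intros A HA HD; rewrite discrete_set_function_Borel by (apply Borel_union; auto).
    replace (fun n => discrete_set_function (A n)) with (fun n => discrete_mass (A n))
      by (apply functional_extensionality; intros; rewrite discrete_set_function_Borel; auto).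
    apply discrete_mass_sigma_additive; auto.
  - intros A HA; unfold discrete_set_function; destruct excluded_middle_informative; tauto.
Defined.

Lemma discrete_measure_Borel A : Borel A -> discrete_measure A = discrete_mass A.
Proof. apply discrete_set_function_Borel. Qed.

End DiscreteMeasure.

(** * The uniform grid of mesh 1/N *)

(* The last cell is closed on the right, so that the cells partition [0,1]. *)
Definition grid_cell (N a : nat) (y : II) : Prop :=
  INR a <= INR N * ival y /\ (INR N * ival y < INR a + 1 \/ S a = N).

Definition grid_open_cell (N a : nat) (y : II) : Prop :=
  INR a < INR N * ival y < INR a + 1.

Definition grid_midpoint (N a : nat) : II := clamp ((INR a + / 2) / INR N).

Definition grid_margin (N : nat) : R := / (4 * INR N).

Section Grid.
Variable N : nat.
Hypothesis HN : (1 <= N)%nat.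

Lemma INR_N_pos : 0 < INR N.
Proof. apply lt_0_INR; lia. Qed.

Lemma INR_succ_le_N a : (a < N)%nat -> INR a + 1 <= INR N.
Proof. intros; rewrite <- S_INR; apply le_INR; lia. Qed.

Lemma grid_cell_Borel a : Borel (grid_cell N a).
Proof.
  pose proof INR_N_pos.
  apply Borel_and.
  - apply (Borel_ext (fun y => ~ (INR N * ival y < INR a))); [intros; lra|].
    apply Borel_compl, Borel_open, I_open_lt_scaled; auto.
  - apply Borel_or; [apply Borel_open, I_open_lt_scaled; auto|].
    destruct (Nat.eq_dec (S a) N).
    + apply (Borel_ext (fun _ => True)); [tauto | apply Borel_True].
    + apply (Borel_ext (fun _ => False)); [tauto | apply Borel_False].
Qed.

Lemma grid_cell_exists y : exists a, (a < N)%nat /\ grid_cell N a y.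
Proof.
  pose proof (ival_bounds y); pose proof INR_N_pos.
  assert (Hscan : forall d a, (a + d = N - 1)%nat -> INR a <= INR N * ival y ->
                  exists a', (a' < N)%nat /\ grid_cell N a' y).
  { induction d as [|d IH]; intros a Had Ha.
    - exists a; split; [lia | split; auto; right; lia].
    - destruct (Rlt_le_dec (INR N * ival y) (INR a + 1)).
      + exists a; split; [lia | split; auto].
      + apply (IH (S a)); [lia | rewrite S_INR; auto]. }
  apply (Hscan (N - 1)%nat 0%nat); [lia | simpl; nra].
Qed.

Lemma grid_partition : partition N (grid_cell N).
Proof.
  split; [|split; [|apply grid_cell_exists]].
  - intros; apply grid_cell_Borel.
  - intros a b Ha Hb Hab y [[h1 h2] [h3 h4]].
    destruct (Nat.lt_total a b) as [Hlt|[Heq|Hlt]]; [|lia|].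
    + assert (INR a + 1 <= INR b) by (rewrite <- S_INR; apply le_INR; lia).
      destruct h2; [lra | lia].
    + assert (INR b + 1 <= INR a) by (rewrite <- S_INR; apply le_INR; lia).
      destruct h4; [lra | lia].
Qed.

Lemma grid_cell_diameter a y z : (a < N)%nat -> grid_cell N a y -> grid_cell N a z ->
  INR N * Rabs (ival y - ival z) <= 1.
Proof.
  intros Ha [h1 h2] [h3 h4].
  pose proof (ival_bounds y); pose proof (ival_bounds z); pose proof INR_N_pos; pose proof (pos_INR a).
  assert (INR N * ival y <= INR a + 1 /\ INR N * ival z <= INR a + 1).
  { assert (e : S a = N -> INR N = INR a + 1) by (intros <-; rewrite S_INR; auto).
    destruct h2, h4; split; try lra; rewrite e by auto; nra. }
  rewrite <- (Rabs_right (INR N)), <- Rabs_mult by lra; apply Rabs_le_iff; nra.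
Qed.

Lemma grid_midpoint_scaled a : (a < N)%nat -> INR N * ival (grid_midpoint N a) = INR a + / 2.
Proof.
  intros Ha; pose proof INR_N_pos; pose proof (INR_succ_le_N a Ha); pose proof (pos_INR a).
  unfold grid_midpoint; rewrite ival_clamp; [field; lra|].
  split; [apply Rmult_le_pos; [lra | left; apply Rinv_0_lt_compat; lra]|].
  apply (Rmult_le_reg_r (INR N)); auto.
  unfold Rdiv; rewrite Rmult_assoc, Rinv_l by lra; lra.
Qed.

Lemma grid_midpoint_open_cell a : (a < N)%nat -> grid_open_cell N a (grid_midpoint N a).
Proof. intros Ha; unfold grid_open_cell; rewrite grid_midpoint_scaled; auto; lra. Qed.

Lemma grid_open_cell_sub a y : grid_open_cell N a y -> grid_cell N a y.
Proof. unfold grid_open_cell, grid_cell; intros; split; [lra | left; lra]. Qed.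

Lemma grid_open_cell_open a : I_open (grid_open_cell N a).
Proof. pose proof INR_N_pos; apply I_open_and; [apply I_open_gt_scaled | apply I_open_lt_scaled]; auto. Qed.

Lemma grid_margin_bounds : 0 < grid_margin N <= / 4.
Proof.
  pose proof INR_N_pos; assert (1 <= INR N) by (apply (le_INR 1); auto).
  unfold grid_margin; split; [apply Rinv_0_lt_compat; lra | apply Rinv_le_contravar; lra].
Qed.

Lemma grid_midpoint_margin b : (b < N)%nat ->
  grid_margin N <= ival (grid_midpoint N b) <= 1 - grid_margin N.
Proof.
  intros Hb; pose proof INR_N_pos; pose proof (INR_succ_le_N b Hb); pose proof (pos_INR b).
  pose proof (grid_midpoint_scaled b Hb).
  assert (Hm : grid_margin N * INR N = / 4) by (unfold grid_margin; field; lra).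
  split; apply (Rmult_le_reg_r (INR N)); auto; nra.
Qed.

Lemma indicator_grid_cell a a' y : (a < N)%nat -> (a' < N)%nat -> grid_cell N a y ->
  indicator (grid_cell N a' y) = if Nat.eq_dec a a' then 1 else 0.
Proof.
  intros Ha Ha' Hy; destruct Nat.eq_dec as [<-|Hne]; [apply indicator_true; auto|].
  apply indicator_false; intros h; destruct grid_partition as [_ [HD _]].
  apply (HD a a' Ha Ha' Hne y); auto.
Qed.

End Grid.

(** * Weak* neighbourhoods and transport between grid masses *)

Definition grid_determined (O : ProbMeasure -> Prop) (N : nat) : Prop :=
  exists m0 : ProbMeasure, forall nu : ProbMeasure,
    (forall a, (a < N)%nat -> nu (grid_cell N a) = m0 (grid_cell N a)) -> O nu.

(* The test functions of a basic neighbourhood are uniformly continuous, so they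
   vary by at most eps/5 on a grid cell once the mesh is below their common modulus. *)
Lemma M_open_grid_determined O : M_open O -> (exists m, O m) ->
  exists eta, 0 < eta /\ forall N, (1 <= N)%nat -> INR N * eta > 1 -> grid_determined O N.
Proof.
  intros HO [m0 Hm0]; destruct (HO m0 Hm0) as [k [g [eps [He [Hc Hnb]]]]].
  destruct (exists_common_pos k (fun j eta => forall y z,
              Rabs (ival y - ival z) < eta -> Rabs (g j y - g j z) < eps / 5)) as [eta [Heta Hunif]].
  - intros i e e' He' HP y z Hyz; apply HP; lra.
  - intros i Hi; destruct (I_contR_uniform (g i) (Hc i Hi) (eps / 5)) as [eta [Heta H]]; [lra|].
    exists eta; split; auto.
  - exists eta; split; auto; intros N HN HNeta; exists m0; intros nu Hnu; apply Hnb.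
    intros j Hj v1 v2 Hv1 Hv2.
    assert (Rabs (v1 - v2) <= 4 * (eps / 5)); [|lra].
    apply (integrals_close_of_equal_masses m0 nu N (grid_cell N) (grid_midpoint N) (g j) (eps / 5));
      auto; [apply grid_partition; auto | lra | | intros a Ha; symmetry; auto].
    intros a x Ha Jx; left; apply Hunif; auto.
    pose proof (grid_cell_diameter N HN a x (grid_midpoint N a) Ha Jx
                  (grid_open_cell_sub N a _ (grid_midpoint_open_cell N HN a Ha))).
    pose proof (Rabs_pos (ival x - ival (grid_midpoint N a))); pose proof (INR_N_pos N HN); nra.
Qed.

(* The witness puts mass mu0(cell a) * nu0(cell b) at a point of cell a that h sends
   to the midpoint of cell b. *)
Lemma grid_transport N (mu0 nu0 : ProbMeasure) (h : II -> II) (u : nat -> nat -> II) :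
  (1 <= N)%nat -> I_cont h ->
  (forall a b, (a < N)%nat -> (b < N)%nat ->
     grid_open_cell N a (u a b) /\ h (u a b) = grid_midpoint N b) ->
  exists m1 m2 : ProbMeasure,
    (forall a, (a < N)%nat -> m1 (grid_cell N a) = mu0 (grid_cell N a)) /\
    is_pushforward h m1 m2 /\
    (forall b, (b < N)%nat -> m2 (grid_cell N b) = nu0 (grid_cell N b)).
Proof.
  intros HN Hh Hu.
  set (w := fun a b => mu0 (grid_cell N a) * nu0 (grid_cell N b)).
  pose proof (partition_mass mu0 N _ (grid_partition N HN)) as Hmu0.
  pose proof (partition_mass nu0 N _ (grid_partition N HN)) as Hnu0.
  assert (Hw : forall a b, (a < N)%nat -> (b < N)%nat -> 0 <= w a b)
    by (intros; apply Rmult_le_pos; apply mu_nonneg, grid_cell_Borel; auto).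
  assert (Hrow : forall a, fsum (fun b => w a b) N = mu0 (grid_cell N a))
    by (intros a; unfold w; rewrite fsum_scal, Hnu0; ring).
  assert (Hcol : forall b, fsum (fun a => w a b) N = nu0 (grid_cell N b))
    by (intros b; unfold w; rewrite fsum_scalr, Hmu0; ring).
  assert (Hw1 : fsum (fun a => fsum (fun b => w a b) N) N = 1)
    by (rewrite (fsum_ext _ _ _ (fun a _ => Hrow a)); auto).
  exists (discrete_measure N N w u Hw Hw1),
         (discrete_measure N N w (fun _ b => grid_midpoint N b) Hw Hw1).
  split; [|split].
  - intros a' Ha'; rewrite discrete_measure_Borel by (apply grid_cell_Borel; auto).
    rewrite <- Hrow; unfold discrete_mass.
    rewrite (fsum_ext _ (fun a => (if Nat.eq_dec a a' then 1 else 0) * fsum (fun b => w a b) N)),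
      fsum_kronecker; auto.
    intros a Ha; rewrite <- fsum_scal; apply fsum_ext; intros b Hb.
    rewrite (indicator_grid_cell N HN a a' (u a b)); [ring | auto | auto |].
    apply grid_open_cell_sub, Hu; auto.
  - intros A HA; rewrite !discrete_measure_Borel by (auto; apply Borel_preimage; auto).
    apply fsum_ext; intros a Ha; apply fsum_ext; intros b Hb.
    destruct (Hu a b Ha Hb) as [_ ->]; auto.
  - intros b' Hb'; rewrite discrete_measure_Borel by (apply grid_cell_Borel; auto).
    rewrite <- Hcol; unfold discrete_mass; apply fsum_ext; intros a Ha.
    rewrite (fsum_ext _ (fun b => (if Nat.eq_dec b b' then 1 else 0) * w a b)),
      (fsum_kronecker (fun b => w a b)); auto.
    intros b Hb; rewrite (indicator_grid_cell N HN b b' (grid_midpoint N b)); [ring | auto | auto |].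
    apply grid_open_cell_sub, grid_midpoint_open_cell; auto.
Qed.

(** * Dynamics of a weakly mixing sequence of interval maps *)

Definition open_nonempty (O : II -> Prop) : Prop := I_open O /\ exists y, O y.

Lemma ball_between x r b1 b2 u : ball x r b1 -> ball x r b2 ->
  Rmin (ival b1) (ival b2) <= ival u <= Rmax (ival b1) (ival b2) -> ball x r u.
Proof.
  unfold ball; intros h1 h2 Hu; apply Rabs_lt_iff in h1, h2; apply Rabs_lt_iff.
  unfold Rmin, Rmax in Hu; repeat destruct Rle_dec in Hu; lra.
Qed.

Section Dynamics.
Variable f : nat -> II -> II.
Hypothesis hcont : forall n, (1 <= n)%nat -> I_cont (f n).
Hypothesis hwm3 : weakly_mixing_order I_open (I_step f) 3.

Notation F := (fcomp f).

Lemma fcomp_cont n : I_cont (F n).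
Proof.
  induction n as [|n IH]; simpl.
  - intros x eps He; exists eps; split; auto.
  - intros x eps He; destruct (hcont (S n) ltac:(lia) (F n x) eps He) as [d1 [Hd1 Hd1']].
    destruct (IH x d1 Hd1) as [d2 [Hd2 Hd2']]; exists d2; split; auto.
Qed.

Lemma fcomp_agree_after k n x y : (k <= n)%nat -> F k x = F k y -> F n x = F n y.
Proof. intros Hkn; induction Hkn; auto; simpl; intros H; rewrite IHHkn; auto. Qed.

Lemma fcomp_small_ball x K : exists r, 0 < r /\ forall n, (n <= K)%nat -> forall y,
  ball x r y -> Rabs (ival (F n y) - ival (F n x)) < / 4.
Proof.
  destruct (exists_common_pos (S K) (fun n r => forall y, ball x r y ->
              Rabs (ival (F n y) - ival (F n x)) < / 4)) as [r [Hr H]].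
  - intros i e e' He HP y Hy; apply HP; eapply ball_le; [|eauto]; lra.
  - intros i Hi; destruct (fcomp_cont i x (/ 4)) as [d [Hd Hd']]; [lra|].
    exists d; split; auto.
  - exists r; split; auto; intros n Hn; apply H; lia.
Qed.

Lemma weakly_mixing_three U1 U2 U3 V1 V2 V3 :
  open_nonempty U1 -> open_nonempty U2 -> open_nonempty U3 ->
  open_nonempty V1 -> open_nonempty V2 -> open_nonempty V3 ->
  exists n, (1 <= n)%nat /\ (exists y, U1 y /\ V1 (F n y)) /\
    (exists y, U2 y /\ V2 (F n y)) /\ (exists y, U3 y /\ V3 (F n y)).
Proof.
  intros [HU1 ?] [HU2 ?] [HU3 ?] [HV1 ?] [HV2 ?] [HV3 ?].
  destruct (hwm3 (fun i => match i with O => U1 | 1%nat => U2 | _ => U3 end)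
                 (fun i => match i with O => V1 | 1%nat => V2 | _ => V3 end)) as [n [Hn Hmix]].
  - intros [|[|[|i]]] Hi; repeat split; auto; lia.
  - unfold I_step in Hmix; exists n; split; auto.
    destruct (Hmix 0%nat) as [y1 [z1 [? [-> ?]]]], (Hmix 1%nat) as [y2 [z2 [? [-> ?]]]],
      (Hmix 2%nat) as [y3 [z3 [? [-> ?]]]]; try lia; eauto 10.
Qed.

Section Margin.
Variable dl : R.
Hypothesis Hdl : 0 < dl <= / 4.

Lemma open_nonempty_lower : open_nonempty (fun y => ival y < dl).
Proof. split; [apply I_open_lt | exists (clamp 0); rewrite ival_clamp; lra]. Qed.

Lemma open_nonempty_upper : open_nonempty (fun y => 1 - dl < ival y).
Proof. split; [apply I_open_gt | exists (clamp 1); rewrite ival_clamp; lra]. Qed.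

Lemma I_open_middle : I_open (fun y => dl < ival y < 1 - dl).
Proof. apply I_open_and; [apply I_open_gt | apply I_open_lt]. Qed.

Lemma open_nonempty_middle : open_nonempty (fun y => dl < ival y < 1 - dl).
Proof. split; [apply I_open_middle | exists (clamp (/ 2)); rewrite ival_clamp; lra]. Qed.

(* The radius is shrunk so that no time up to K moves the ball by 1/4, which
   forces the stretching time beyond K. *)
Lemma ball_image_covers_middle x r K Z : 0 < r -> open_nonempty Z ->
  exists k, (K < k)%nat /\
    (forall y, dl <= ival y <= 1 - dl -> exists u, ball x r u /\ F k u = y) /\
    (exists z, Z z /\ dl < ival (F k z) < 1 - dl).
Proof.
  intros Hr HZ.
  destruct (fcomp_small_ball x K) as [r1 [Hr1 Hsmall]].
  assert (Hr' : 0 < Rmin r r1) by (apply Rmin_pos; auto).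
  assert (Hball : open_nonempty (ball x (Rmin r r1)))
    by (split; [apply ball_open | exists x; apply ball_center; auto]).
  destruct (weakly_mixing_three _ _ _ _ _ _ Hball Hball HZ
              open_nonempty_lower open_nonempty_upper open_nonempty_middle)
    as [k [_ [[b1 [Hb1 Lb1]] [[b2 [Hb2 Ub2]] Hz]]]].
  assert (HKk : (K < k)%nat).
  { destruct (le_lt_dec k K) as [Hle|]; auto; exfalso.
    pose proof (Hsmall k Hle b1 (ball_le _ _ _ _ (Rmin_r r r1) Hb1)) as H1.
    pose proof (Hsmall k Hle b2 (ball_le _ _ _ _ (Rmin_r r r1) Hb2)) as H2.
    apply Rabs_lt_iff in H1, H2; lra. }
  exists k; split; [|split]; auto.
  intros y Hy.
  destruct (I_cont_IVT (F k) b1 b2 (ival y) (fcomp_cont k)) as [u [Hu Hu']]; try lra.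
  exists u; split; [|apply ival_inj; auto].
  apply (ball_le _ (Rmin r r1)); [apply Rmin_l | apply (ball_between x _ b1 b2); auto].
Qed.

Lemma shadowing_set M (U : nat -> II -> Prop) :
  (forall i, (i < M)%nat -> open_nonempty (U i)) ->
  exists Z K, open_nonempty Z /\ forall i, (i < M)%nat -> forall n, (K <= n)%nat ->
    forall z, Z z -> exists u, U i u /\ F n u = F n z.
Proof.
  induction M as [|M IH]; intros HU.
  - exists (fun _ => True), O; split; [|intros; lia].
    split; [intros y _; exists 1; split; [lra | auto] | exists (clamp 0); auto].
  - destruct IH as [Z [K [HZ Hshadow]]]; [intros; apply HU; lia|].
    destruct (HU M ltac:(lia)) as [HUo [x Hx]]; destruct (HUo x Hx) as [r [Hr Hball]].
    destruct (ball_image_covers_middle x r K Z Hr HZ) as [k [HKk [Hcover [z Hz]]]].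
    exists (fun w => Z w /\ dl < ival (F k w) < 1 - dl), k; split.
    + split; [|exists z; auto]; apply I_open_and; [apply HZ|].
      apply (I_open_preimage (F k) (fun y => dl < ival y < 1 - dl));
        [apply fcomp_cont | apply I_open_middle].
    + intros i Hi n Hn w [Zw Mw]; destruct (Nat.eq_dec i M) as [->|HiM].
      * destruct (Hcover (F k w)) as [u [Hu Hu']]; [lra|].
        exists u; split; [apply Hball; auto | apply (fcomp_agree_after k); auto].
      * apply Hshadow; auto; lia.
Qed.

Lemma images_cover_middle M (U : nat -> II -> Prop) :
  (forall i, (i < M)%nat -> open_nonempty (U i)) ->
  exists n, (1 <= n)%nat /\ forall i, (i < M)%nat -> forall y, dl <= ival y <= 1 - dl ->
    exists u, U i u /\ F n u = y.
Proof.
  intros HU; destruct (shadowing_set M U HU) as [Z [K [HZ Hshadow]]].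
  pose proof HZ as [HZo [z0 Hz0]]; destruct (HZo z0 Hz0) as [r [Hr Hball]].
  destruct (ball_image_covers_middle z0 r K Z Hr HZ) as [n [HKn [Hcover _]]].
  exists n; split; [lia|]; intros i Hi y Hy.
  destruct (Hcover y Hy) as [v [Hv <-]].
  apply (Hshadow i Hi n); [lia | apply Hball; auto].
Qed.

End Margin.

Lemma grid_preimages N : (1 <= N)%nat ->
  exists n (u : nat -> nat -> II), (1 <= n)%nat /\ forall a b, (a < N)%nat -> (b < N)%nat ->
    grid_open_cell N a (u a b) /\ F n (u a b) = grid_midpoint N b.
Proof.
  intros HN.
  destruct (images_cover_middle (grid_margin N) (grid_margin_bounds N HN) N (grid_open_cell N))
    as [n [Hn Hcover]].
  { intros a Ha; split; [apply grid_open_cell_open, HN|].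
    exists (grid_midpoint N a); apply grid_midpoint_open_cell; auto. }
  destruct (choice (fun ab v => (fst ab < N)%nat -> (snd ab < N)%nat ->
              grid_open_cell N (fst ab) v /\ F n v = grid_midpoint N (snd ab))) as [u Hu].
  { intros [a b]; simpl; destruct (lt_dec a N) as [Ha|Ha]; [destruct (lt_dec b N) as [Hb|Hb]|].
    - destruct (Hcover a Ha (grid_midpoint N b)) as [v Hv];
        [apply grid_midpoint_margin; auto | exists v; auto].
    - exists (clamp 0); intros; lia.
    - exists (clamp 0); intros; lia. }
  exists n, (fun a b => u (a, b)); split; auto; intros a b Ha Hb; apply (Hu (a, b)); auto.
Qed.

End Dynamics.

Theorem mainTheorem5 (f : nat -> II -> II)
  (hcont : forall n, (1 <= n)%nat -> I_cont (f n))
  (hwm3 : weakly_mixing_order I_open (I_step f) 3) :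
  weakly_mixing_all M_open (M_step f).
Proof.
  intros M _ U V HUV.
  destruct (exists_common_pos M (fun i eta => forall N, (1 <= N)%nat -> INR N * eta > 1 ->
              grid_determined (U i) N /\ grid_determined (V i) N)) as [eta [Heta Hgrid]].
  { intros i e e' He H N HN HNe; apply H; auto; nra. }
  { intros i Hi; destruct (HUV i Hi) as [HU [HV [HUne HVne]]].
    destruct (M_open_grid_determined _ HU HUne) as [e1 [He1 G1]].
    destruct (M_open_grid_determined _ HV HVne) as [e2 [He2 G2]].
    exists (Rmin e1 e2); split; [apply Rmin_pos; auto|].
    intros N HN HNe; pose proof (Rmin_l e1 e2); pose proof (Rmin_r e1 e2); pose proof (pos_INR N).
    split; [apply G1 | apply G2]; auto; nra. }
  destruct (INR_archimed eta 1 Heta) as [N0 HN0].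
  assert (HN : (1 <= S N0)%nat) by lia.
  assert (HNe : INR (S N0) * eta > 1) by (rewrite S_INR; lra).
  destruct (grid_preimages f hcont hwm3 (S N0) HN) as [n [u [Hn Hu]]].
  exists n; split; auto; intros i Hi.
  destruct (Hgrid i Hi (S N0) HN HNe) as [[mu0 Hmu0] [nu0 Hnu0]].
  destruct (grid_transport (S N0) mu0 nu0 (fcomp f n) u HN (fcomp_cont f hcont n) Hu)
    as [m1 [m2 [Hm1 [Hpush Hm2]]]].
  exists m1, m2; auto.
Qed.
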